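(* Let $a\in A\subseteq\mathbf{R}^n$, $C\in\mathbf{R}$, and let $f:\mathbf{R}^n\to\mathcal{P}(\mathbf{R}^n)$ be a multivalued map such that $\Theta^n(\mathscr{L}^n\llcorner(\mathbf{R}^n\setminus A),a)=0$, $f(b)$ is a singleton for every $b\in A$, $f|A$ is differentiable at $a$, and $$|f(b)-y|\le C|b-c|\quad\text{whenever }b\in A,\ c\in\mathbf{R}^n,\ y\in f(c).$$ Then $f$ is strongly differentiable at $a$.
   Context: $\mathcal{P}(\mathbf{R}^n)$ is the power set. $\Theta^n(\mu,x)=\lim_{r\downarrow0}\mu(\mathbf{B}(x,r))/(\alpha(n)r^n)$ (Euclidean closed balls). For a multivalued $T$ and a set $A$, $T|A$ is the multivalued map equal to $T$ on $A$ and to $\varnothing$ off $A$; a singleton value is identified with its element. A multivalued map $T$ from $\mathbf{R}^n$ to $\mathbf{R}^m$ is differentiable at $a$ if $T(a)$ is a singleton and there exists a linear $L$ such that for every $\varepsilon>0$ there is $\delta>0$ with $|y-T(a)-L(x-a)|\le\varepsilon|x-a|$ whenever $|x-a|\le\delta$ and $y\in T(x)$; it is strongly differentiable at $a$ if it is differentiable at $a$ and such $L$ is unique. *)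

From HB Require Import structures.
From mathcomp Require Import all_boot all_order all_algebra.
From mathcomp Require Import all_classical all_reals all_analysis.
Set Implicit Arguments. Unset Strict Implicit. Unset Printing Implicit Defensive.
Import Order.TTheory GRing.Theory Num.Theory.
Import numFieldNormedType.Exports.
Local Open Scope classical_set_scope.
Local Open Scope ring_scope.

Section Defs.
Variable R : realType.

Definition enorm (n : nat) (v : 'rV[R]_n) : R :=
  Num.sqrt (\sum_(i < n) (v ord0 i) ^+ 2).

Definition cball (n : nat) (x : 'rV[R]_n) (r : R) : set 'rV[R]_n :=
  [set y | enorm (y - x) <= r].

Definition box (n : nat) (a b : 'rV[R]_n) : set 'rV[R]_n :=
  [set x | forall i : 'I_n, a ord0 i <= x ord0 i <= b ord0 i].
Definition boxvol (n : nat) (a b : 'rV[R]_n) : R :=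
  \prod_(i < n) (b ord0 i - a ord0 i).

Definition leb_outer (n : nat) (A : set 'rV[R]_n) : \bar R :=
  ereal_inf [set s : \bar R | exists a b : nat -> 'rV[R]_n,
     [/\ (forall k (i : 'I_n), a k ord0 i <= b k ord0 i),
         A `<=` \bigcup_k box (a k) (b k) &
         s = (\sum_(0 <= k <oo) (boxvol (a k) (b k))%:E)%E]].

Definition alpha (n : nat) : R := fine (leb_outer (cball (0 : 'rV[R]_n) 1)).

Definition density_is (n : nat) (mu : set 'rV[R]_n -> \bar R)
  (x : 'rV[R]_n) (l : \bar R) : Prop :=
  ((fun r : R => mu (cball x r) * ((alpha n * r ^+ n)^-1)%:E)%E
     @ 0^'+ --> l).

Definition leb_restr (n : nat) (E : set 'rV[R]_n) : set 'rV[R]_n -> \bar R :=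
  fun S => leb_outer (S `&` E).

Definition mvrestr (n m : nat) (T : 'rV[R]_n -> set 'rV[R]_m) (A : set 'rV[R]_n)
  : 'rV[R]_n -> set 'rV[R]_m :=
  fun x => [set y | A x /\ T x y].

Definition mv_deriv_at (n m : nat) (T : 'rV[R]_n -> set 'rV[R]_m)
  (a : 'rV[R]_n) (L : 'M[R]_(n, m)) : Prop :=
  exists b : 'rV[R]_m, T a = [set b] /\
    forall eps : R, 0 < eps -> exists2 delta : R, 0 < delta &
      forall x y, enorm (x - a) <= delta -> T x y ->
        enorm (y - b - (x - a) *m L) <= eps * enorm (x - a).

Definition mv_differentiable (n m : nat) (T : 'rV[R]_n -> set 'rV[R]_m)
  (a : 'rV[R]_n) : Prop :=
  (exists b, T a = [set b]) /\ exists L, mv_deriv_at T a L.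

Definition mv_strongly_differentiable (n m : nat) (T : 'rV[R]_n -> set 'rV[R]_m)
  (a : 'rV[R]_n) : Prop :=
  mv_differentiable T a /\
  forall L1 L2, mv_deriv_at T a L1 -> mv_deriv_at T a L2 -> L1 = L2.

End Defs.

From HB Require Import structures.
From mathcomp Require Import all_boot all_order all_algebra.
From mathcomp Require Import all_classical all_reals all_analysis.
From mathcomp Require Import ring lra finmap.
Import Order.TTheory GRing.Theory Num.Theory.
Import numFieldNormedType.Exports.
Local Open Scope classical_set_scope.
Local Open Scope ring_scope.
Set Implicit Arguments. Unset Strict Implicit. Unset Printing Implicit Defensive.

(* Density zero of the complement of A at a means that, at every scale, each
   x near a has a point p of A with |p - x| = o(|x - a|): otherwise a cube of
   side comparable to |x - a| around x, which is free of A, would carry a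
   fixed fraction of the measure of a ball around a. This uses the elementary
   bound L^n(cube of side h) >= h^n, proved by compactness and by counting
   lattice points.
   For y in f x, pick such a p and z in f p; then |y - z| <= C |x - p| carries
   the first order estimate of f|A at p over to f at x, so f is differentiable
   at a with the derivative of f|A. Two derivatives L1, L2 of f at a satisfy
   (p - a) (L1 - L2) = o(|p - a|) for p in A, and the directions p - a of such
   p approximate every direction, hence L1 = L2. *)

Lemma exists_scale_le (R : realFieldType) (e M : R) : 0 < e -> 0 <= M ->
  exists2 t, 0 < t <= 1 & t * M <= e.
Proof.
move=> e0 M0; exists (Num.min 1 (e / (M + 1))).
  by rewrite lt_min ltr01 divr_gt0 ?ge_min ?lexx //; lra.
apply: le_trans (_ : e / (M + 1) * M <= _).
  by apply: ler_wpM2r => //; rewrite ge_min lexx orbT.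
by rewrite mulrAC ler_pdivrMr; nra.
Qed.

Lemma dist_le_center (R : numDomainType) (V : normedZmodType R) (a x p : V) (eta : R) :
  `|p - x| <= eta * `|x - a| -> `|p - a| <= (1 + eta) * `|x - a|.
Proof.
move=> px; have -> : p - a = (p - x) + (x - a) by rewrite addrA subrK.
by apply: le_trans (ler_normD _ _) _; rewrite mulrDl mul1r addrC lerD2l.
Qed.

Section MatrixSupNorm.
Variable R : realDomainType.

Lemma coord_le_normr m n (M : 'M[R]_(m, n)) i j : `|M i j| <= `|M|.
Proof. by rewrite [leRHS]/Num.Def.normr /= mx_normrE; exact: (le_bigmax _ _ (i, j)). Qed.

Lemma normr_le_coord m n (M : 'M[R]_(m, n)) (s : R) :
  0 <= s -> (forall i j, `|M i j| <= s) -> `|M| <= s.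
Proof.
move=> s0 hM; rewrite [leLHS]/Num.Def.normr /= mx_normrE.
by apply: bigmax_le => // -[i j] _; exact: hM.
Qed.

Lemma normr_mulmx_le n m (v : 'rV[R]_n) (L : 'M[R]_(n, m)) :
  `|v *m L| <= n%:R * `|L| * `|v|.
Proof.
apply: normr_le_coord => [|i j]; first by rewrite !mulr_ge0.
rewrite mxE -mulrA mulr_natl -[n in _ *+ n]card_ord -sumr_const.
apply: le_trans (ler_norm_sum _ _ _) _; apply: ler_sum => k _.
by rewrite normrM mulrC ler_pM ?coord_le_normr.
Qed.

End MatrixSupNorm.

Section RowNorms.
Variable R : realType.

Lemma box_ballE n (x : 'rV[R]_n) (s : R) : 0 <= s ->
  box (x - const_mx s) (x + const_mx s) = [set y | `|y - x| <= s].
Proof.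
move=> s0; apply/seteqP; split => y /= hy.
  by apply: normr_le_coord => // i j; rewrite ord1 !mxE ler_distl; have := hy j; rewrite !mxE.
move=> i; rewrite !mxE -ler_distl.
by have := coord_le_normr (y - x) ord0 i; rewrite !mxE => /le_trans; apply.
Qed.

Lemma normr_le_enorm n (v : 'rV[R]_n) : `|v| <= enorm v.
Proof.
apply: normr_le_coord => [|i j]; first exact: sqrtr_ge0.
rewrite ord1 /enorm -sqrtr_sqr ler_sqrt; last by apply: sumr_ge0 => k _; exact: sqr_ge0.
by rewrite (bigD1 j) //= lerDl; apply: sumr_ge0 => k _; exact: sqr_ge0.
Qed.

Lemma enorm_le_normr n (v : 'rV[R]_n) : enorm v <= Num.sqrt n%:R * `|v|.
Proof.
rewrite /enorm -(ger0_norm (normr_ge0 v)) -sqrtr_sqr -sqrtrM // ler_sqrt; last first.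
  by rewrite mulr_ge0 ?sqr_ge0.
rewrite mulr_natl -[n in _ *+ n]card_ord -sumr_const; apply: ler_sum => i _.
by rewrite -real_normK ?num_real // ler_sqr ?nnegrE ?normr_ge0 ?coord_le_normr.
Qed.

End RowNorms.

Section OuterMeasure.
Variable R : realType.

Lemma boxvol_ge0 n (a b : 'rV[R]_n) :
  (forall i, a ord0 i <= b ord0 i) -> 0 <= boxvol a b.
Proof. by move=> ab; apply: prodr_ge0 => i _; rewrite subr_ge0. Qed.

Lemma le_leb_outer n (S T : set 'rV[R]_n) : S `<=` T -> (leb_outer S <= leb_outer T)%E.
Proof.
move=> ST; apply: ereal_inf_le_tmp => _ [a [b [ab Tab ->]]].
by exists a, b; split => //; apply: subset_trans Tab.
Qed.

(* In dimension 0 every box has volume 1, so the covering below, padded with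
   degenerate boxes, would have infinite total volume. *)
Lemma leb_outer_le_boxvol m (S : set 'rV[R]_m.+1) (a b : 'rV[R]_m.+1) :
  (forall i, a ord0 i <= b ord0 i) -> S `<=` box a b -> (leb_outer S <= (boxvol a b)%:E)%E.
Proof.
move=> ab Sab; apply: ereal_inf_lbound.
exists (fun k => if k is 0 then a else 0 : 'rV_m.+1).
exists (fun k => if k is 0 then b else 0 : 'rV_m.+1); split.
- by case.
- by move=> y /Sab yab; exists 0%N.
rewrite (nneseries_split 0 1) => [|[|k] _]; rewrite ?lee_fin; first last.
- by apply: boxvol_ge0 => i; rewrite mxE.
- exact: boxvol_ge0.
rewrite eseries0 => [|[|k] //= _ _]; last by rewrite /boxvol big_ord_recr /= !mxE subrr mulr0.
by rewrite adde0 add0n big_nat1.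
Qed.

Lemma prod_addr_le n (x : 'I_n -> R) (t : R) : (forall i, 0 <= x i) -> 0 <= t <= 1 ->
  \prod_i (x i + t) <= \prod_i x i + t * (n%:R * \prod_i (x i + 1)).
Proof.
elim: n x => [|n IH] x x0 /andP[t0 t1]; first by rewrite !big_ord0 mul0r mulr0 addr0.
rewrite !big_ord_recr /= -natr1.
set x' := fun i : 'I_n => x (widen_ord (leqnSn n) i).
have := IH x' (fun i => x0 _); rewrite t0 t1 => /(_ isT).
set Pt := \prod_(i < n) (x' i + t); set P0 := \prod_(i < n) x' i.
set P1 := \prod_(i < n) (x' i + 1); set y := x ord_max => hP.
have y0 : 0 <= y := x0 _.
have x'0 i : 0 <= x' i := x0 _.
have P00 : 0 <= P0 by apply: prodr_ge0 => i _.
have P10 : 0 <= P1 by apply: prodr_ge0 => i _; rewrite addr_ge0.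
have PtP1 : Pt <= P1.
  by apply: ler_prod => i _; rewrite lerD2l t1 andbT addr_ge0.
have q1 : Pt * y <= (P0 + t * (n%:R * P1)) * y by apply: ler_wpM2r.
have q2 : t * Pt <= t * P1 by apply: ler_wpM2l.
have q3 : 0 <= t * (n%:R * P1) by rewrite !mulr_ge0.
have q4 : 0 <= t * P1 * y by rewrite !mulr_ge0.
have -> : P0 * y + t * ((n%:R + 1) * (P1 * (y + 1))) =
  (P0 + t * (n%:R * P1)) * y + t * P1 + (t * (n%:R * P1) + t * P1 * y) by ring.
have -> : Pt * (y + t) = Pt * y + t * Pt by ring.
lra.
Qed.

Lemma sum_indicator_le (P : pred nat) (u v : R) m : u <= v ->
  (forall j, P j -> u <= j%:R <= v) -> \sum_(j < m) (P j)%:R <= v - u + 1.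
Proof.
move=> uv hP.
suff /(_ m) : forall m, \sum_(j < m) ((P j)%:R : R) = 0 \/
    \sum_(j < m) ((P j)%:R : R) <= Num.min (m%:R - u) (v - u + 1).
  by case=> [->|]; [lra | rewrite le_min => /andP[]].
elim=> [|k IH]; first by left; rewrite big_ord0.
rewrite big_ord_recr /= -natr1 le_min.
case Pk: (P k); rewrite /= ?addr0; last first.
  by case: IH => [->|]; [left | rewrite le_min => /andP[h1 h2]; right; rewrite h2; lra].
have /andP[uk kv] := hP _ Pk.
by right; case: IH => [->|]; [|rewrite le_min => /andP[h1 h2]]; apply/andP; split; lra.
Qed.

Lemma lattice_segment_count (c lo hi s : R) N : 0 < s -> lo <= hi ->
  \sum_(j < N) ((lo <= c + j%:R * s <= hi)%R)%:R <= (hi - lo + s) / s.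
Proof.
move=> s0 lohi.
have -> : (hi - lo + s) / s = (hi - c) / s - (lo - c) / s + 1 by field; rewrite gt_eqF.
apply: (sum_indicator_le (P := fun j => (lo <= c + j%:R * s <= hi)%R)) => [|j /andP[lo_j j_hi]].
  by rewrite ler_pM2r ?invr_gt0 // lerD2r.
by rewrite ler_pdivrMr // ler_pdivlMr //; apply/andP; split; lra.
Qed.

(* Each of the (N+1)^n points of mesh h/N in the cube lies in some box, and
   box k contains at most \prod_i (b k i - a k i + h/N) / (h/N) of them. *)
Lemma cube_cover_lattice n (al : 'rV[R]_n) (h : R) K (a b : nat -> 'rV[R]_n) N :
  0 < h -> (0 < N)%N -> (forall k i, a k ord0 i <= b k ord0 i) ->
  (forall y : 'rV[R]_n, (forall i, al ord0 i <= y ord0 i <= al ord0 i + h) ->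
     exists2 k, (k < K)%N & box (a k) (b k) y) ->
  h ^+ n <= \sum_(k < K) \prod_i (b k ord0 i - a k ord0 i + h / N%:R).
Proof.
move=> h0 N0 ab cover; set s := h / N%:R.
have N0' : 0 < N%:R :> R by rewrite ltr0n.
have s0 : 0 < s by rewrite divr_gt0.
pose F (k : 'I_K) i (j : 'I_N.+1) : R :=
  ((a k ord0 i <= al ord0 i + j%:R * s <= b k ord0 i)%R)%:R.
have hit (g : {ffun 'I_n -> 'I_N.+1}) : 1 <= \sum_(k < K) \prod_i F k i (g i).
  have [k kK hk] : exists2 k, (k < K)%N & box (a k) (b k) (\row_i (al ord0 i + (g i)%:R * s)).
    apply: cover => i; rewrite mxE lerDl lerD2l (mulr_ge0 (ler0n _ _) (ltW s0)) /=.
    by rewrite /s mulrA ler_pdivrMr // mulrC ler_pM2l // ler_nat -ltnS.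
  rewrite (bigD1 (Ordinal kK)) //= big1 => [|i _]; last first.
    by rewrite /F; have := hk i; rewrite mxE => ->.
  by rewrite lerDl sumr_ge0 // => k' _; apply: prodr_ge0.
have count : (N.+1 ^ n)%:R <= \sum_(k < K) \prod_i \sum_(j < N.+1) F k i j.
  apply: le_trans (_ : \sum_(g : {ffun 'I_n -> 'I_N.+1}) (1 : R) <= _).
    by rewrite sumr_const card_ffun !card_ord.
  apply: le_trans (ler_sum _ (fun g _ => hit g)) _.
  rewrite exchange_big /=; apply: ler_sum => k _.
  by rewrite (bigA_distr_bigA (fun i (j : 'I_N.+1) => F k i j)).
have seg k i : \sum_(j < N.+1) F k i j <= (b k ord0 i - a k ord0 i + s) / s.
  exact: lattice_segment_count.
have -> : h = s * N%:R by rewrite divfK ?gt_eqF.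
rewrite exprMn.
apply: le_trans (_ : s ^+ n * (N.+1 ^ n)%:R <= _).
  apply: ler_wpM2l; first by rewrite exprn_ge0 // ltW.
  by rewrite natrX; apply: lerXn2r; rewrite ?nnegrE ?ler0n ?ler_nat.
apply: le_trans (_ : s ^+ n * \sum_(k < K) \prod_i ((b k ord0 i - a k ord0 i + s) / s) <= _).
  apply: ler_wpM2l; first by rewrite exprn_ge0 // ltW.
  apply: le_trans count _.
  apply: ler_sum => k _; apply: ler_prod => i _.
  by rewrite seg andbT sumr_ge0.
rewrite mulr_sumr le_eqVlt; apply/orP; left; apply/eqP/eq_bigr => k _.
rewrite -[n in s ^+ n]card_ord -prodr_const -big_split; apply: eq_bigr => i _ /=.
by rewrite mulrC divfK ?gt_eqF.
Qed.

Lemma cube_cover_vol n (al : 'rV[R]_n) (h : R) K (a b : nat -> 'rV[R]_n) :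
  0 < h -> (forall k i, a k ord0 i <= b k ord0 i) ->
  (forall y : 'rV[R]_n, (forall i, al ord0 i <= y ord0 i <= al ord0 i + h) ->
     exists2 k, (k < K)%N & box (a k) (b k) y) ->
  h ^+ n <= \sum_(k < K) boxvol (a k) (b k).
Proof.
move=> h0 ab cover.
set M := \sum_(k < K) n%:R * \prod_i (b k ord0 i - a k ord0 i + 1).
have M0 : 0 <= M.
  by apply: sumr_ge0 => k _; rewrite mulr_ge0 // prodr_ge0 // => i _; rewrite addr_ge0 ?subr_ge0.
apply/ler_addgt0Pr => e e0.
have hMe0 : 0 <= h * M / e by rewrite divr_ge0 ?mulr_ge0 // ltW.
have X0 : 0 <= h + h * M / e by rewrite addr_ge0 // ltW.
have hN := archi_boundP X0; set N := Num.Def.archi_bound _ in hN.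
have hMN : h * M / e <= N%:R by lra.
have N0' : 0 < N%:R :> R by lra.
have N0 : (0 < N)%N by rewrite -(ltr0n R).
apply: le_trans (cube_cover_lattice h0 N0 ab cover) _.
apply: le_trans (_ : \sum_(k < K) boxvol (a k) (b k) + h / N%:R * M <= _); last first.
  by rewrite lerD2l mulrAC ler_pdivrMr // -ler_pdivrMl // mulrC.
rewrite /M mulr_sumr -big_split /=; apply: ler_sum => k _.
apply: (prod_addr_le (x := fun i => b k ord0 i - a k ord0 i)) => [i|]; first by rewrite subr_ge0.
by rewrite divr_ge0 ?ler_pdivrMr ?mul1r //=; lra.
Qed.

Lemma boxvol_enlarge n (a b : 'rV[R]_n) (e : R) :
  (forall i, a ord0 i <= b ord0 i) -> 0 < e ->
  exists2 d, 0 < d & boxvol (a - const_mx d) (b + const_mx d) <= boxvol a b + e.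
Proof.
move=> ab e0.
have M0 : 0 <= n%:R * \prod_i (b ord0 i - a ord0 i + 1).
  by rewrite mulr_ge0 // prodr_ge0 // => i _; rewrite addr_ge0 ?subr_ge0.
have [t /andP[t0 t1] tM] := exists_scale_le e0 M0.
exists (t / 2); first by rewrite divr_gt0.
have -> : boxvol (a - const_mx (t / 2)) (b + const_mx (t / 2)) =
    \prod_i (b ord0 i - a ord0 i + t).
  by apply: eq_bigr => i _; rewrite !mxE; field.
apply: le_trans (prod_addr_le (x := fun i => b ord0 i - a ord0 i) (t := t) _ _) _.
- by move=> i; rewrite subr_ge0.
- by rewrite ltW.
by rewrite lerD2l.
Qed.

Definition obox n (a b : 'rV[R]_n) :=
  [set y : 'rV[R]_n | forall i, a ord0 i < y ord0 i < b ord0 i].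

Lemma obox_open n (a b : 'rV[R]_n) : open (obox a b).
Proof.
rewrite openE => y Oy; rewrite /interior.
apply: (@filter_forall _ _ (fun i (z : 'rV[R]_n) => a ord0 i < z ord0 i < b ord0 i)
  (nbhs y) (nbhs_filter y)) => i.
apply: (@coord_continuous R 1 n ord0 i y [set r | a ord0 i < r < b ord0 i]).
have /andP[ay yb] := Oy i.
by apply: filterS2 (lt_nbhsr ay) (lt_nbhsl yb) => r /= -> ->.
Qed.

Lemma box_compact n (a b : 'rV[R]_n) : compact (box a b).
Proof.
have -> : box a b = [set v | forall i, `[a ord0 i, b ord0 i]%classic (v ord0 i)].
  by apply/seteqP; split => v hv i /=; move: (hv i); rewrite /= in_itv.
exact: (rV_compact (fun i => @segment_compact R _ _)).
Qed.

Lemma cube_cover_vol_approx n (al be : 'rV[R]_n) (h g : R) (a b : nat -> 'rV[R]_n) :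
  0 < h -> (forall i, be ord0 i = al ord0 i + h) -> (forall k i, a k ord0 i <= b k ord0 i) ->
  box al be `<=` \bigcup_k box (a k) (b k) -> 0 < g ->
  exists K, h ^+ n <= \sum_(k < K) boxvol (a k) (b k) + g.
Proof.
(* Enlarge box k to an open box at the cost eps k in volume and extract a
   finite subcover by compactness. *)
move=> h0 hbe ab cov g0.
set eps := fun k : nat => g / (2 ^ k.+1)%:R.
have eps0 k : 0 < eps k by rewrite divr_gt0 // ltr0n expn_gt0.
have epsum K : \sum_(k < K) eps k <= g.
  have := @nneseries_lim_ge _ (fun k => (eps k)%:E) xpredT 0 K.
  move=> /(_ (fun k _ _ => ltW (eps0 k))).
  move/le_trans/(_ (epsilon_trick0 xpredT (ltW g0))).
  by rewrite sumEFin lee_fin big_mkord.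
have /choice [d hd] : forall k, exists d, 0 < d /\
    boxvol (a k - const_mx d) (b k + const_mx d) <= boxvol (a k) (b k) + eps k.
  by move=> k; have [d d0 hd] := boxvol_enlarge (ab k) (eps0 k); exists d.
set a' := fun k => a k - const_mx (d k); set b' := fun k => b k + const_mx (d k).
have cover' : box al be `<=` \bigcup_(k in setT) obox (a' k) (b' k).
  move=> y /cov [k _ yk]; exists k => // i; have := yk i; have := (hd k).1.
  by rewrite /a' /b' !mxE; lra.
have := @box_compact n al be; rewrite compact_cover.
move=> /(_ _ _ _ (fun k _ => @obox_open n (a' k) (b' k)) cover') [D _ hD].
set K := (\max_(k <- D) k).+1; exists K.
have ab' k i : a' k ord0 i <= b' k ord0 i.
  by rewrite /a' /b' !mxE; have := ab k i; have := (hd k).1; lra.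
have cube_cover (y : 'rV[R]_n) : (forall i, al ord0 i <= y ord0 i <= al ord0 i + h) ->
    exists2 k, (k < K)%N & box (a' k) (b' k) y.
  move=> hy; have [|k kD yk] := hD y; first by move=> i; rewrite hbe; exact: hy.
  exists k; first by rewrite ltnS; exact: (@leq_bigmax_seq _ _ xpredT id k kD).
  by move=> i; have /andP[? ?] := yk i; apply/andP; split; apply: ltW.
apply: le_trans (cube_cover_vol h0 ab' cube_cover) _.
apply: le_trans (_ : \sum_(k < K) (boxvol (a k) (b k) + eps k) <= _).
  by apply: ler_sum => k _; exact: (hd k).2.
by rewrite big_split /= lerD2l epsum.
Qed.

Lemma leb_outer_cube n (al be : 'rV[R]_n) (h : R) :
  0 < h -> (forall i, be ord0 i = al ord0 i + h) ->
  ((h ^+ n)%:E <= leb_outer (box al be))%E.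
Proof.
move=> h0 hbe; apply: le_ereal_inf_tmp => _ [a [b [ab cov ->]]].
have vol0 k : (0 <= (boxvol (a k) (b k))%:E)%E by rewrite lee_fin boxvol_ge0.
have S0 : (0 <= \sum_(0 <= k <oo) (boxvol (a k) (b k))%:E)%E.
  exact: nneseries_ge0.
have psum K : (\sum_(0 <= k < K) (boxvol (a k) (b k))%:E <=
    \sum_(0 <= k <oo) (boxvol (a k) (b k))%:E)%E.
  exact: nneseries_lim_ge.
move: S0 psum; case: (\sum_(0 <= k <oo) _)%E => [s _ psum| _ _|//]; last by rewrite leey.
rewrite lee_fin; apply/ler_addgt0Pr => g g0.
have [K hK] := cube_cover_vol_approx h0 hbe ab cov g0.
apply: le_trans hK _; rewrite lerD2r.
by have := psum K; rewrite sumEFin lee_fin big_mkord.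
Qed.

Lemma alpha_gt0 m : 0 < @alpha R m.+1.
Proof.
(* [alpha] is [fine] of an outer measure: an upper bound is needed as well. *)
set c := Num.sqrt (m.+1)%:R :> R.
have c0 : 0 < c by rewrite sqrtr_gt0 ltr0n.
have lo : (((2 / c) ^+ m.+1)%:E <= leb_outer (cball (0 : 'rV[R]_m.+1) 1))%E.
  apply: le_trans (leb_outer_cube (al := 0 - const_mx c^-1) (be := 0 + const_mx c^-1) _ _)
    (le_leb_outer _).
  - by rewrite divr_gt0.
  - by move=> i; rewrite !mxE; field; rewrite gt_eqF.
  rewrite box_ballE ?invr_ge0 ?ltW // => y /=; rewrite subr0 /cball /= subr0 => yc.
  apply: le_trans (enorm_le_normr y) _.
  by rewrite -ler_pdivlMl // mulr1.
have up : (leb_outer (cball (0 : 'rV[R]_m.+1) 1) <= ((2 : R) ^+ m.+1)%:E)%E.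
  apply: le_trans (leb_outer_le_boxvol (a := 0 - const_mx 1) (b := 0 + const_mx 1) _ _) _.
  - by move=> i; rewrite !mxE; lra.
  - rewrite box_ballE // => y; rewrite /cball /= subr0; exact: le_trans (normr_le_enorm y).
  rewrite lee_fin /boxvol (eq_bigr (fun=> 2)) ?prodr_const ?card_ord // => i _.
  by rewrite !mxE; lra.
rewrite /alpha; move: lo up; case: (leb_outer _) => [r| |] //.
by rewrite !lee_fin => lo _; apply: lt_le_trans lo; rewrite exprn_gt0 // divr_gt0.
Qed.

End OuterMeasure.

Section Density.
Variable R : realType.

Definition asymp_dense n (A : set 'rV[R]_n) (a : 'rV[R]_n) :=
  forall eta, 0 < eta -> exists2 delta, 0 < delta &
    forall x, `|x - a| <= delta -> exists2 p, A p & `|p - x| <= eta * `|x - a|.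

Lemma density0_lt n (mu : set 'rV[R]_n -> \bar R) (x : 'rV[R]_n) (q : R) :
  density_is mu x 0%E -> 0 < q ->
  exists2 delta, 0 < delta & forall r, 0 < r < delta ->
    (mu (cball x r) * ((alpha R n * r ^+ n)^-1)%:E < q%:E)%E.
Proof.
move=> dens q0; have q0E : (0 < q%:E)%E by rewrite lte_fin.
have /= /nbhs_ballP [delta /= delta0 hdelta] := dens _ (open_ereal_lt' q0E).
exists delta => // r /andP[r0 r_lt].
have r_ball : ball 0 delta r by rewrite /ball /= sub0r normrN gtr0_norm.
exact: hdelta r_ball r0.
Qed.

Lemma density_ratio_ge_cube m (E : set 'rV[R]_m.+1) (a x : 'rV[R]_m.+1) (s r : R) :
  0 < s -> 0 < r -> box (x - const_mx s) (x + const_mx s) `<=` cball a r `&` E ->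
  ((((2 * s) ^+ m.+1) / (alpha R m.+1 * r ^+ m.+1))%:E <=
    leb_restr E (cball a r) * ((alpha R m.+1 * r ^+ m.+1)^-1)%:E)%E.
Proof.
move=> s0 r0 sub; rewrite EFinM; apply: lee_wpmul2r.
  by rewrite lee_fin invr_ge0 mulr_ge0 ?exprn_ge0 ?ltW ?alpha_gt0.
apply: le_trans (le_leb_outer sub).
by apply: leb_outer_cube => [|i]; rewrite ?mulr_gt0 // !mxE; ring.
Qed.

Lemma density0_asymp_dense n (A : set 'rV[R]_n) (a : 'rV[R]_n) :
  A a -> density_is (leb_restr (~` A)) a 0%E -> asymp_dense A a.
Proof.
case: n A a => [|m] A a Aa dens eta eta0.
  by exists 1 => // x _; exists a; rewrite // (thinmx0 (a - x)) normr0 mulr_ge0 // ltW.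
set c := Num.sqrt (m.+1)%:R :> R.
have c0 : 0 < c by rewrite sqrtr_gt0 ltr0n.
have al0 := alpha_gt0 R m.
set k := c * (1 + eta).
have k0 : 0 < k by rewrite mulr_gt0 // ltr_wpDr // ltW.
set q := (2 * eta / k) ^+ m.+1 / alpha R m.+1.
have q0 : 0 < q by rewrite divr_gt0 // exprn_gt0 // divr_gt0 // mulr_gt0.
have [de de0 hde] := density0_lt dens q0.
exists (de / (2 * k)) => [|x hx]; first by rewrite divr_gt0 // mulr_gt0.
have [->|x_ne_a] := eqVneq x a; first by exists a; rewrite // subrr normr0 mulr0.
set r0 := `|x - a| in hx *.
have r00 : 0 < r0 by rewrite normr_gt0 subr_eq0.
(* Otherwise the cube of half-side eta |x - a| around x lies in the
   complement of A and in the ball of radius k |x - a| around a, which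
   forces the density ratio at that radius up to q. *)
apply: contrapT => no_p.
set s := eta * r0.
have s0 : 0 < s by rewrite mulr_gt0.
have kr0 : 0 < k * r0 by rewrite mulr_gt0.
have sub : box (x - const_mx s) (x + const_mx s) `<=` cball a (k * r0) `&` ~` A.
  rewrite box_ballE ?ltW // => y /= yx; split; last by move=> Ay; apply: no_p; exists y.
  rewrite /cball /=; apply: le_trans (enorm_le_normr _) _.
  by rewrite /k -mulrA ler_pM2l //; exact: dist_le_center.
have kr0_in : 0 < k * r0 < de.
  rewrite kr0 /=; have : k * r0 <= k * (de / (2 * k)) by rewrite ler_pM2l.
  have -> : k * (de / (2 * k)) = de / 2 by field; rewrite gt_eqF.
  lra.
have := hde _ kr0_in; apply/negP; rewrite -leNgt.
have -> : q = (2 * s) ^+ m.+1 / (alpha R m.+1 * (k * r0) ^+ m.+1).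
  have -> : 2 * s = 2 * eta / k * (k * r0) by rewrite /s; field; rewrite gt_eqF.
  rewrite exprMn /q; have := gt_eqF al0; have := gt_eqF (exprn_gt0 m.+1 kr0).
  by move: (alpha R m.+1) ((k * r0) ^+ m.+1) => A0 B0 B00 A00; field; rewrite A00 B00.
exact: density_ratio_ge_cube sub.
Qed.

End Density.

Section Approximation.
Variable R : realType.

(* The estimate of [mv_deriv_at], with the Euclidean norm replaced by any size
   function [nu]; we work with the sup norm of 'rV, whose triangle inequality
   is available, and translate through [mv_deriv_atE]. *)
Definition approx_at (nu : forall k, 'rV[R]_k -> R) n m
    (T : 'rV[R]_n -> set 'rV[R]_m) (a : 'rV[R]_n) (b : 'rV[R]_m) (L : 'M[R]_(n, m)) :=
  forall eps, 0 < eps -> exists2 delta, 0 < delta &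
    forall x y, nu _ (x - a) <= delta -> T x y ->
      nu _ (y - b - (x - a) *m L) <= eps * nu _ (x - a).

Lemma approx_at_equiv (nu mu : forall k, 'rV[R]_k -> R) (c : nat -> R) n m
    (T : 'rV[R]_n -> set 'rV[R]_m) a b L :
  (forall k, 0 < c k) ->
  (forall k (v : 'rV[R]_k), mu _ v <= c k * nu _ v) ->
  (forall k (v : 'rV[R]_k), nu _ v <= c k * mu _ v) ->
  approx_at nu T a b L -> approx_at mu T a b L.
Proof.
move=> c0 mu_nu nu_mu hnu eps eps0.
have cnm0 : 0 < c n * c m by rewrite mulr_gt0.
have [delta delta0 hdelta] := hnu _ (divr_gt0 eps0 cnm0).
exists (delta / c n) => [|x y hx Txy]; first by rewrite divr_gt0.
have hx' : nu _ (x - a) <= delta.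
  by apply: le_trans (nu_mu _ _) _; rewrite mulrC -ler_pdivlMr.
apply: le_trans (mu_nu _ _) _.
apply: le_trans (ler_wpM2l (ltW (c0 m)) (hdelta _ _ hx' Txy)) _.
apply: le_trans (ler_wpM2l (ltW (c0 m)) (ler_wpM2l _ (nu_mu _ (x - a)))) _.
  by rewrite divr_ge0 // ltW.
rewrite le_eqVlt; apply/orP; left; apply/eqP.
by field; rewrite !gt_eqF.
Qed.

Definition supn k (v : 'rV[R]_k) := `|v|.

Lemma mv_deriv_atE n m (T : 'rV[R]_n -> set 'rV[R]_m) a L :
  mv_deriv_at T a L <-> exists b, T a = [set b] /\ approx_at supn T a b L.
Proof.
have c0 k : 0 < Num.sqrt k%:R + 1 :> R by rewrite ltr_wpDl ?sqrtr_ge0.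
have sup_e k (v : 'rV[R]_k) : `|v| <= (Num.sqrt k%:R + 1) * enorm v.
  by rewrite mulrDl mul1r ler_wpDl ?mulr_ge0 ?sqrtr_ge0 ?normr_le_enorm.
have e_sup k (v : 'rV[R]_k) : enorm v <= (Num.sqrt k%:R + 1) * `|v|.
  by rewrite mulrDl mul1r ler_wpDr ?enorm_le_normr.
split=> -[b [Tab hb]]; exists b; split => //.
  exact: (approx_at_equiv (nu := @enorm R) c0 sup_e e_sup).
exact: (approx_at_equiv (mu := @enorm R) c0 e_sup sup_e).
Qed.

Lemma approx_at_diff n m (T : 'rV[R]_n -> set 'rV[R]_m) a b L1 L2 :
  approx_at supn T a b L1 -> approx_at supn T a b L2 ->
  forall eps, 0 < eps -> exists2 delta, 0 < delta &
    forall x y, `|x - a| <= delta -> T x y -> `|(x - a) *m (L1 - L2)| <= eps * `|x - a|.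
Proof.
move=> h1 h2 eps eps0.
have [d1 d10 hd1] := h1 _ (divr_gt0 eps0 (ltr0n R 2)).
have [d2 d20 hd2] := h2 _ (divr_gt0 eps0 (ltr0n R 2)).
exists (Num.min d1 d2) => [|x y hx Txy]; first by rewrite lt_min d10.
have e1 : `|y - b - (x - a) *m L1| <= eps / 2 * `|x - a|.
  by apply: hd1 Txy; apply: le_trans hx _; rewrite ge_min lexx.
have e2 : `|y - b - (x - a) *m L2| <= eps / 2 * `|x - a|.
  by apply: hd2 Txy; apply: le_trans hx _; rewrite ge_min lexx orbT.
rewrite mulmxBr.
have -> : (x - a) *m L1 - (x - a) *m L2 =
    (y - b - (x - a) *m L2) - (y - b - (x - a) *m L1) by rewrite opprB [RHS]addrC subrKA.
by apply: le_trans (ler_normB _ _) _; rewrite [in leRHS](splitr eps) mulrDl lerD.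
Qed.

End Approximation.
Arguments supn {R} k v.

Section DenseDomain.
Variables (R : realType) (n m : nat) (A : set 'rV[R]_n) (a : 'rV[R]_n).
Hypothesis A_dense : asymp_dense A a.

Lemma mx_eq0_asymp_dense (D : 'M[R]_(n, m)) :
  (forall eps, 0 < eps -> exists2 delta, 0 < delta &
     forall p, A p -> `|p - a| <= delta -> `|(p - a) *m D| <= eps * `|p - a|) ->
  D = 0.
Proof.
move=> hD.
suff vD0 (v : 'rV[R]_n) : `|v *m D| <= 0.
  apply/matrixP => i j; have := vD0 (delta_mx 0 i).
  by rewrite normr_le0 -rowE => /eqP /rowP /(_ j); rewrite !mxE.
set M := (2 + n%:R * `|D|) * `|v|.
have M0 : 0 <= M by rewrite mulr_ge0 // addr_ge0 // mulr_ge0.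
apply/ler_addgt0Pr => eps eps0; rewrite add0r.
have [eta /andP[eta0 eta1] etaM] := exists_scale_le eps0 M0.
have [d1 d10 hd1] := hD _ eta0.
have [d2 d20 hd2] := A_dense eta0.
(* Test D in the direction of x := a + t v, which is close to some p in A. *)
set t := Num.min d2 (d1 / 2) / (`|v| + 1).
have t0 : 0 < t by rewrite divr_gt0 ?lt_min ?d20 ?divr_gt0 // ltr_wpDl.
set x := a + t *: v.
have xa : `|x - a| = t * `|v| by rewrite /x addrAC subrr add0r normrZ gtr0_norm.
have tv : t * `|v| <= Num.min d2 (d1 / 2).
  have d0 : 0 <= Num.min d2 (d1 / 2) by rewrite le_min !ltW ?divr_gt0.
  by rewrite /t mulrAC ler_pdivrMr ?ltr_wpDl // ler_wpM2l // lerDl.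
have [p Ap px] : exists2 p, A p & `|p - x| <= eta * (t * `|v|).
  by rewrite -xa; apply: hd2; rewrite xa; apply: le_trans tv _; rewrite ge_min lexx.
have pa : `|p - a| <= 2 * (t * `|v|).
  rewrite -xa in px *; apply: le_trans (dist_le_center px) _.
  by rewrite ler_wpM2r // lerD2l.
have pD : `|(p - a) *m D| <= eta * (2 * (t * `|v|)).
  apply: le_trans (hd1 _ Ap _) _; first by apply: le_trans pa _; move: tv; rewrite le_min; lra.
  by rewrite ler_wpM2l // ltW.
have pxD : `|(p - x) *m D| <= n%:R * `|D| * (eta * (t * `|v|)).
  by apply: le_trans (normr_mulmx_le _ _) _; rewrite ler_wpM2l // mulr_ge0.
have tvD : t *: (v *m D) = (p - a) *m D - (p - x) *m D.
  by rewrite -mulmxBl opprB [_ + (x - p)]addrC subrKA /x addrAC subrr add0r scalemxAl.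
have : `|t *: (v *m D)| <= t * (eta * M).
  rewrite tvD; apply: le_trans (ler_normB _ _) _; apply: le_trans (lerD pD pxD) _.
  by rewrite le_eqVlt /M; apply/orP; left; apply/eqP; ring.
by rewrite normrZ gtr0_norm // ler_pM2l // => /le_trans; apply.
Qed.

Variable f : 'rV[R]_n -> set 'rV[R]_m.
Hypothesis f_nonempty : forall p, A p -> exists z, f p z.

Lemma approx_at_unique b L1 L2 :
  approx_at supn f a b L1 -> approx_at supn f a b L2 -> L1 = L2.
Proof.
move=> h1 h2; apply/eqP; rewrite -subr_eq0; apply/eqP/mx_eq0_asymp_dense => eps eps0.
have [delta delta0 hdelta] := approx_at_diff h1 h2 eps0.
by exists delta => // p Ap pa; have [z fz] := f_nonempty Ap; exact: hdelta fz.
Qed.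

Variable K : R.
Hypothesis K_ge0 : 0 <= K.
Hypothesis f_lip : forall p x z y, A p -> f p z -> f x y -> `|z - y| <= K * `|p - x|.

Lemma approx_at_mvrestr b L :
  approx_at supn (mvrestr f A) a b L -> approx_at supn f a b L.
Proof.
move=> hL e e0; rewrite /supn.
set M := K + n%:R * `|L| + 2.
have M0 : 0 <= M by rewrite /M !addr_ge0 // mulr_ge0.
have [eta /andP[eta0 eta1] etaM] := exists_scale_le e0 M0.
have [d1 d10 hd1] := hL _ eta0.
have [d2 d20 hd2] := A_dense eta0.
exists (Num.min d2 (d1 / 2)) => [|x y hx fxy]; first by rewrite lt_min d20 divr_gt0.
set r := `|x - a| in hx *.
have [p Ap px] : exists2 p, A p & `|p - x| <= eta * r.
  by apply: hd2; apply: le_trans hx _; rewrite ge_min lexx.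
have [z fz] := f_nonempty Ap.
have pa : `|p - a| <= 2 * r.
  by apply: le_trans (dist_le_center px) _; rewrite ler_wpM2r // lerD2l.
have hpz : `|z - b - (p - a) *m L| <= eta * (2 * r).
  apply: le_trans (hd1 p z _ (conj Ap fz)) _; last by rewrite ler_wpM2l // ltW.
  by apply: le_trans pa _; move: hx; rewrite le_min; lra.
have hyz : `|y - z| <= K * (eta * r).
  by rewrite distrC; apply: le_trans (f_lip Ap fz fxy) _; rewrite ler_wpM2l.
have hpx : `|(p - x) *m L| <= n%:R * `|L| * (eta * r).
  by apply: le_trans (normr_mulmx_le _ _) _; rewrite ler_wpM2l // mulr_ge0.
have -> : y - b - (x - a) *m L = (y - z) + (z - b - (p - a) *m L) + (p - x) *m L.
  have -> : (p - a) *m L = (p - x) *m L + (x - a) *m L by rewrite -mulmxDl addrA subrK.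
  by move: ((p - x) *m L) ((x - a) *m L) => P Q; apply/rowP => i; rewrite !mxE; ring.
apply: le_trans (ler_normD _ _) _.
apply: le_trans (lerD (le_trans (ler_normD _ _) (lerD hyz hpz)) hpx) _.
apply: (@le_trans _ _ (eta * M * r)); last by apply: ler_wpM2r => //; exact: normr_ge0.
by rewrite le_eqVlt /M; apply/orP; left; apply/eqP; ring.
Qed.

End DenseDomain.

Theorem lemma2p38 (R : realType) (n : nat) (A : set 'rV[R]_n) (a : 'rV[R]_n)
  (C : R) (f : 'rV[R]_n -> set 'rV[R]_n) :
  A a ->
  density_is (leb_restr (~` A)) a 0%E ->
  (forall b, A b -> exists z, f b = [set z]) ->
  mv_differentiable (mvrestr f A) a ->
  (forall b c y z, A b -> f b z -> f c y -> enorm (z - y) <= C * enorm (b - c)) ->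
  mv_strongly_differentiable f a.
Proof.
move=> Aa A_dens f_single [_ [L /mv_deriv_atE [b [fAab hL]]]] f_lip.
have A_dense := density0_asymp_dense Aa A_dens.
have f_nonempty p : A p -> exists z, f p z by move=> /f_single [z ->]; exists z.
have fab : f a = [set b].
  by rewrite -fAab; apply/seteqP; split => y; [move=> fay; split | case].
have K_ge0 : 0 <= `|C| * Num.sqrt n%:R by rewrite mulr_ge0 ?sqrtr_ge0.
have f_lip_sup p x z y : A p -> f p z -> f x y -> `|z - y| <= `|C| * Num.sqrt n%:R * `|p - x|.
  move=> Ap fz fy; apply: le_trans (normr_le_enorm _) _.
  apply: le_trans (f_lip _ _ _ _ Ap fz fy) _; rewrite -mulrA.
  apply: le_trans (ler_wpM2r (sqrtr_ge0 _) (real_ler_norm (num_real C))) _.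
  by rewrite ler_wpM2l // enorm_le_normr.
split.
  split; first by exists b.
  exists L; apply/mv_deriv_atE; exists b; split => //.
  exact: (approx_at_mvrestr A_dense f_nonempty K_ge0 f_lip_sup hL).
move=> L1 L2 /mv_deriv_atE [b1 [fb1 h1]] /mv_deriv_atE [b2 [fb2 h2]].
have eq_b b' : f a = [set b'] -> b' = b.
  by move=> fab'; have /[!fab] : f a b' by rewrite fab'.
rewrite (eq_b _ fb1) in h1; rewrite (eq_b _ fb2) in h2.
exact: (approx_at_unique A_dense f_nonempty h1 h2).
Qed.
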